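(* There exist two players with the same (general, non-additive) valuation $v$ over a finite set of goods such that no allocation is both EFX and Pareto optimal. Here $v$ is allowed to have zero marginal utility, i.e. $v(S\cup\{g\})=v(S)$ for some $S$ and $g\notin S$.
   Context: A valuation is a function $v:2^M\to\mathbb{R}_{\ge0}$ with $v(\emptyset)=0$ that is monotone: $v(S)\le v(T)$ whenever $S\subseteq T$. An allocation is an ordered partition $(A_1,\dots,A_n)$ of $M$; parts may be empty. It is EFX if for all players $i,j$ and every $g\in A_j$ we have $v_i(A_i)\ge v_i(A_j\setminus\{g\})$. It is Pareto optimal (PO) if there is no allocation $B$ with $v_i(B_i)\ge v_i(A_i)$ for all $i$ and $v_j(B_j)>v_j(A_j)$ for some $j$. *)

From mathcomp Require Import all_boot.
From Stdlib Require Import Reals.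
Set Implicit Arguments. Unset Strict Implicit. Unset Printing Implicit Defensive.

Definition valuation (M : finType) (v : {set M} -> R) : Prop :=
  v set0 = 0%R /\ (forall S, Rle 0 (v S)) /\
  (forall S T : {set M}, S \subset T -> Rle (v S) (v T)).

Definition is_allocation (n : nat) (M : finType) (A : 'I_n -> {set M}) : Prop :=
  (forall i j : 'I_n, i != j -> [disjoint A i & A j]) /\
  (\bigcup_(i < n) A i = [set: M]).

Definition EFX (n : nat) (M : finType) (vs : 'I_n -> {set M} -> R)
  (A : 'I_n -> {set M}) : Prop :=
  forall (i j : 'I_n) (g : M), g \in A j -> Rle (vs i (A j :\ g)) (vs i (A i)).

Definition pareto_optimal (n : nat) (M : finType) (vs : 'I_n -> {set M} -> R)
  (A : 'I_n -> {set M}) : Prop :=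
  ~ (exists B : 'I_n -> {set M}, is_allocation B /\
       (forall i, Rle (vs i (A i)) (vs i (B i))) /\
       (exists j, Rlt (vs j (A j)) (vs j (B j)))).

(** With identical valuations, let one good [a] carry all the value: a bundle
    is worth its size if it contains [a] and nothing otherwise.  Every player
    without [a] gets value 0, so EFX forces the owner of [a] to hold [a] alone
    (dropping any other good leaves a bundle still worth at least 1); but then
    handing all goods to that owner is a Pareto improvement as soon as there
    are at least two goods. *)

From mathcomp Require Import all_boot.
From Stdlib Require Import Reals Lra.

Set Implicit Arguments. Unset Strict Implicit.

Section CardIfMem.

Variables (M : finType) (a : M).

Definition card_if_mem (S : {set M}) : R := if a \in S then INR #|S| else 0%R.

Lemma card_if_mem_in (S : {set M}) : a \in S -> card_if_mem S = INR #|S|.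
Proof. by rewrite /card_if_mem => ->. Qed.

Lemma card_if_mem_notin (S : {set M}) : a \notin S -> card_if_mem S = 0%R.
Proof. by rewrite /card_if_mem => /negbTE ->. Qed.

Lemma valuation_card_if_mem : valuation card_if_mem.
Proof.
split; first by rewrite card_if_mem_notin ?inE.
split=> [S | S T sST]; rewrite /card_if_mem.
  by case: ifP => _; [exact: pos_INR | lra].
case: ifP => aS; last by case: ifP => _; [exact: pos_INR | lra].
by rewrite (subsetP sST a aS); apply/le_INR/leP/subset_leq_card.
Qed.

End CardIfMem.

Section Allocations.

Variables (n : nat) (M : finType).

Lemma is_allocation_all_to (j : 'I_n) :
  is_allocation (fun i : 'I_n => if i == j then [set: M] else set0).
Proof.
split=> [i k ik | ].
  rewrite -setI_eq0; case: (eqVneq i j) => [<- | _] /=; last by rewrite set0I.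
  by rewrite (eq_sym k) (negbTE ik) setI0.
apply/setP=> x; rewrite in_setT; apply/bigcupP; exists j => //.
by rewrite eqxx in_setT.
Qed.

Lemma allocation_owner (A : 'I_n -> {set M}) (x : M) :
  is_allocation A -> exists j, x \in A j.
Proof.
case=> _ cover; have /bigcupP[j _ xj] : x \in \bigcup_(i < n) A i.
  by rewrite cover in_setT.
by exists j.
Qed.

Lemma allocation_unique_owner (A : 'I_n -> {set M}) (x : M) (i j : 'I_n) :
  is_allocation A -> x \in A j -> i != j -> x \notin A i.
Proof. by case=> disj _ xj /disj/disjointFl ->. Qed.

End Allocations.

Section OneValuableGood.

Variables (n : nat) (M : finType) (a : M) (A : 'I_n -> {set M}).
Hypothesis allocA : is_allocation A.

Lemma card_if_mem_non_owner (i j : 'I_n) :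
  a \in A j -> i != j -> card_if_mem a (A i) = 0%R.
Proof.
by move=> aj ij; rewrite card_if_mem_notin // (allocation_unique_owner allocA aj ij).
Qed.

Lemma EFX_owner_singleton (i j : 'I_n) :
  EFX (fun _ => card_if_mem a) A -> a \in A j -> i != j -> A j = [set a].
Proof.
move=> efx aj ij; apply/eqP; rewrite eqEsubset sub1set aj andbT.
apply/subsetP=> g gj; rewrite inE; apply/negPn/negP=> ga.
have a_left : a \in A j :\ g by rewrite !inE eq_sym ga.
have := efx i j g gj; rewrite (card_if_mem_non_owner aj ij) card_if_mem_in //.
have /leP/le_INR : (1 <= #|A j :\ g|)%N by apply/card_gt0P; exists a.
rewrite /=; lra.
Qed.

Lemma singleton_owner_not_pareto_optimal (j : 'I_n) :
  1 < #|M| -> A j = [set a] -> ~ pareto_optimal (fun _ => card_if_mem a) A.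
Proof.
move=> M_gt1 Aj_a; apply; exists (fun k => if k == j then [set: M] else set0).
have aj : a \in A j by rewrite Aj_a set11.
have val_Aj : card_if_mem a (A j) = INR 1.
  by rewrite card_if_mem_in // Aj_a cards1.
have val_all : card_if_mem a [set: M] = INR #|M|.
  by rewrite card_if_mem_in ?inE ?cardsT.
split; first exact: is_allocation_all_to.
split=> [k | ]; last exists j.
  case: (eqVneq k j) => [-> | kj] /=.
    by rewrite val_Aj val_all; apply/le_INR/leP/ltnW.
  by rewrite (card_if_mem_non_owner aj kj) card_if_mem_notin ?inE //; lra.
by rewrite eqxx val_Aj val_all; apply/lt_INR/ltP.
Qed.

Theorem card_if_mem_no_EFX_PO :
  1 < n -> 1 < #|M| ->
  ~ (EFX (fun _ => card_if_mem a) A /\ pareto_optimal (fun _ => card_if_mem a) A).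
Proof.
move=> n_gt1 M_gt1 [efx po].
have [j aj] := allocation_owner a allocA.
have [i ij] : exists i : 'I_n, i != j.
  case: (eqVneq j (Ordinal n_gt1)) => [-> | nej].
    by exists (Ordinal (ltnW n_gt1)).
  by exists (Ordinal n_gt1); rewrite eq_sym.
exact: singleton_owner_not_pareto_optimal M_gt1 (EFX_owner_singleton efx aj ij) po.
Qed.

End OneValuableGood.

Theorem theorem5p2 :
  exists (m : nat) (v : {set 'I_m} -> R),
    valuation v /\
    (exists (S : {set 'I_m}) (g : 'I_m), g \notin S /\ v (g |: S) = v S) /\
    (forall A : 'I_2 -> {set 'I_m},
        is_allocation A ->
        ~ (EFX (fun _ : 'I_2 => v) A /\ pareto_optimal (fun _ : 'I_2 => v) A)).
Proof.
exists 2, (card_if_mem ord0); split; first exact: valuation_card_if_mem.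
split.
  exists set0, ord_max; rewrite in_set0; split=> //.
  by rewrite setU0 !card_if_mem_notin ?inE.
by move=> A allocA; apply: card_if_mem_no_EFX_PO; rewrite ?card_ord.
Qed.
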